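(* For every base $\mathscr{B}$, finite multisets of atoms $S,T$, and IMLL formula $\chi$: if $\Vdash^{S}_{\mathscr{B}}\mathrm{I}$ and $\Vdash^{T}_{\mathscr{B}}\chi$, then $\Vdash^{S,T}_{\mathscr{B}}\chi$.
   Context: Fix a countably infinite set $\mathbb{A}$ of atoms. IMLL formulas: $\varphi::= p\in\mathbb{A}\mid\varphi\otimes\varphi\mid \mathrm{I}\mid\varphi\multimap\varphi$. Collections are finite multisets; ''$,$'' denotes multiset union. An atomic rule is $(P_1\triangleright p_1,\dots,P_n\triangleright p_n)\Rightarrow p$ ($n\ge0$, $P_i$ finite multisets of atoms); a base is a set of atomic rules. Derivability $\vdash_{\mathscr{B}}$ is the least relation with (Ref) $[p]\vdash_{\mathscr{B}}p$; (App) if $(P_1\triangleright p_1,\dots,P_n\triangleright p_n)\Rightarrow p\in\mathscr{B}$ and $S_i,P_i\vdash_{\mathscr{B}}p_i$ for all $i$, then $S_1,\dots,S_n\vdash_{\mathscr{B}}p$. Support: (At) $\Vdash^{P}_{\mathscr{B}}p$ iff $P\vdash_{\mathscr{B}}p$; ($\otimes$) $\Vdash^{P}_{\mathscr{B}}\varphi\otimes\psi$ iff for every $\mathscr{X}\supseteq\mathscr{B}$, multiset of atoms $U$, atom $p$, if $\varphi,\psi\Vdash^{U}_{\mathscr{X}}p$ then $\Vdash^{P,U}_{\mathscr{X}}p$; ($\mathrm{I}$) $\Vdash^{P}_{\mathscr{B}}\mathrm{I}$ iff for every $\mathscr{X}\supseteq\mathscr{B}$, $U$, $p$, if $\Vdash^{U}_{\mathscr{X}}p$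 then $\Vdash^{P,U}_{\mathscr{X}}p$; ($\multimap$) $\Vdash^{P}_{\mathscr{B}}\varphi\multimap\psi$ iff $\varphi\Vdash^{P}_{\mathscr{B}}\psi$; (comma) for nonempty $\Gamma,\Delta$, $\Vdash^{P}_{\mathscr{B}}\Gamma,\Delta$ iff $P=U,V$ for some $U,V$ with $\Vdash^{U}_{\mathscr{B}}\Gamma$, $\Vdash^{V}_{\mathscr{B}}\Delta$ (singleton $[\varphi]$ supported iff $\varphi$ is); (Inf) for nonempty $\Gamma$, $\Gamma\Vdash^{P}_{\mathscr{B}}\varphi$ iff for every $\mathscr{X}\supseteq\mathscr{B}$ and $U$, if $\Vdash^{U}_{\mathscr{X}}\Gamma$ then $\Vdash^{P,U}_{\mathscr{X}}\varphi$. *)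

From mathcomp Require Import all_boot.
Set Implicit Arguments. Unset Strict Implicit. Unset Printing Implicit Defensive.

(* Atoms: the countably infinite set nat.  Finite multisets of atoms are
   represented by sequences up to permutation (perm_eq); multiset union ","
   is concatenation (++). *)
Definition atom := nat.
Definition amset := seq atom.

Inductive formula : Type :=
| Atom of atom
| Tensor of formula & formula
| One
| Lolli of formula & formula.

(* An atomic rule (P_1 |> p_1, ..., P_n |> p_n) => p : list of premises and
   a conclusion.  A base is a set of atomic rules. *)
Definition arule := (seq (amset * atom) * atom)%type.
Definition base := arule -> Prop.

Definition extends (X B : base) : Prop := forall r, B r -> X r.

Inductive derivable (B : base) : amset -> atom -> Prop :=
| der_ref (P : amset) (p : atom) :
    perm_eq P [:: p] -> derivable B P p
| der_app (prems : seq (amset * atom)) (p : atom) (Ss : seq amset) (P : amset) :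
    B (prems, p) ->
    size Ss = size prems ->
    (forall i, i < size prems ->
       derivable B (nth [::] Ss i ++ (nth ([::], 0) prems i).1)
                   (nth ([::], 0) prems i).2) ->
    perm_eq P (flatten Ss) ->
    derivable B P p.

Fixpoint supports (B : base) (P : amset) (phi : formula) {struct phi} : Prop :=
  match phi with
  | Atom p => derivable B P p
  | Tensor phi1 phi2 =>
      forall (X : base) (U : amset) (p : atom), extends X B ->
        (* phi1, phi2 ||-^U_X p  (Inf with the comma clause) *)
        (forall (Y : base) (W : amset), extends Y X ->
           (exists W1 W2, perm_eq W (W1 ++ W2) /\
              supports Y W1 phi1 /\ supports Y W2 phi2) ->
           derivable Y (U ++ W) p) ->
        derivable X (P ++ U) p
  | One =>
      forall (X : base) (U : amset) (p : atom), extends X B ->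
        derivable X U p -> derivable X (P ++ U) p
  | Lolli phi1 phi2 =>
      forall (X : base) (U : amset), extends X B ->
        supports X U phi1 -> supports X (P ++ U) phi2
  end.

From mathcomp Require Import all_boot.

(* For an atom, the clause for I applied
   at B itself turns the derivation of the atom from T into one from S, T.
   The clauses for a tensor and for I both conclude a derivation of an atom
   from P, U in an extension X of B; we get one from T, U by the hypothesis
   on T and then absorb S with the clause for I at X.  For an implication,
   we first move the support of I from B to the extension X (support of I
   is monotone along base extensions, since extension is transitive) and
   then use the induction hypothesis on the conclusion. *)

Lemma extends_refl (B : base) : extends B B.
Proof. by []. Qed.

Lemma extends_trans {B X Y : base} :
  extends Y X -> extends X B -> extends Y B.
Proof. by move=> eYX eXB r /eXB /eYX. Qed.

Lemma supports_one_mono {B X : base} {S : amset} :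
  extends X B -> supports B S One -> supports X S One.
Proof.
by move=> eXB HS Y U p eYX; apply: HS; apply: extends_trans eYX eXB.
Qed.

Theorem lemma1 (B : base) (S T : amset) (chi : formula) :
  supports B S One -> supports B T chi -> supports B (S ++ T) chi.
Proof.
elim: chi B S T => [a | phi1 _ phi2 _ | | phi1 _ phi2 IH2] B S T HS HT /=.
- exact: HS (extends_refl B) HT.
- move=> X U p eXB HU; rewrite -catA.
  exact: HS X (T ++ U) p eXB (HT X U p eXB HU).
- move=> X U p eXB HU; rewrite -catA.
  exact: HS X (T ++ U) p eXB (HT X U p eXB HU).
- move=> X U eXB HU; rewrite -catA.
  exact: IH2 X S (T ++ U) (supports_one_mono eXB HS) (HT X U eXB HU).
Qed.
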